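(* Consider the minimum weight bipartite matching problem for two multisets $R,B$ of $n$ points each in the $d$-dimensional Boolean hypercube $Q_d$ with the $\ell_1$ metric, and suppose the instance is $(d^{3/4},d^{3/4})$-bounded. Then the greedy algorithm achieves an approximation factor of $o(d^{3/4})$, i.e., the weight of the greedy matching is at most $o(d^{3/4})$ times the weight of a minimum weight perfect matching.
   Context: An instance is $(\eta,\zeta)$-bounded if all points of $R\cup B$ can be covered by $\eta$ $\ell_1$-balls of radius $\zeta$ lying within $Q_d$. The greedy algorithm repeatedly matches a pair of currently unmatched points $r\in R$, $b\in B$ at minimum $\ell_1$ distance among all unmatched pairs (ties broken arbitrarily). The weight of a matching is the sum of the $\ell_1$ lengths of its edges. Asymptotics are as $d\to\infty$. *)

From mathcomp Require Import all_boot all_order all_algebra all_fingroup.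
From mathcomp Require Import all_classical all_reals all_analysis.
Set Implicit Arguments. Unset Strict Implicit. Unset Printing Implicit Defensive.
Import Order.TTheory GRing.Theory Num.Theory.
Local Open Scope ring_scope.

Definition cube (d : nat) := {ffun 'I_d -> bool}.

(* The l1 distance on Q_d (= Hamming distance). *)
Definition dist1 (d : nat) (x y : cube d) : nat := #|[set i | x i != y i]|.

(* A perfect matching between R and B (n points each, multisets given as
   indexed families) is a permutation s : R i is matched to B (s i). *)
Definition mweight (d n : nat) (R B : 'I_n -> cube d) (s : 'S_n) : nat :=
  (\sum_(i < n) dist1 (R i) (B (s i)))%N.

Definition is_min_matching (d n : nat) (R B : 'I_n -> cube d) (s : 'S_n) :=
  forall s' : 'S_n, (mweight R B s <= mweight R B s')%N.

(* s is an output of the greedy algorithm (with some tie-breaking): there is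
   an order tau in which the pairs (R (tau k), B (s (tau k))) are matched,
   and at each step k the matched pair has minimum distance among all pairs
   of still unmatched points. *)
Definition is_greedy_matching (d n : nat) (R B : 'I_n -> cube d) (s : 'S_n) :=
  exists tau : 'S_n, forall (k i j : 'I_n),
    (forall l : 'I_n, (l < k)%N -> tau l != i) ->
    (forall l : 'I_n, (l < k)%N -> s (tau l) != j) ->
    (dist1 (R (tau k)) (B (s (tau k))) <= dist1 (R i) (B j))%N.

Definition bounded_instance (Rl : realType) (d n : nat) (eta zeta : Rl)
    (R B : 'I_n -> cube d) :=
  exists (m : nat) (c : 'I_m -> cube d),
    (m%:R <= eta) /\
    (forall i : 'I_n, exists k : 'I_m, (dist1 (R i) (c k))%:R <= zeta) /\
    (forall j : 'I_n, exists k : 'I_m, (dist1 (B j) (c k))%:R <= zeta).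

From mathcomp Require Import all_boot all_order all_algebra all_fingroup.
From mathcomp Require Import all_classical all_reals all_analysis.
From mathcomp Require Import zify ring lra.
Import Order.TTheory GRing.Theory Num.Theory numFieldNormedType.Exports.
Set Implicit Arguments. Unset Strict Implicit. Unset Printing Implicit Defensive.

(* Let phi := sg^-1 \o so: the walk x, phi x, phi^2 x, ... alternates optimal
   edges R x -- B (so x) and greedy edges B (sg (phi x)) -- R (phi x). If every
   inner greedy edge of such a walk was matched before both end points, then
   splitting at the inner edge matched last, where the greedy choice compares it
   with the two half-walks, bounds the distance between the end points by the
   square of the optimal weight along the walk. Now fix the earliest matched
   greedy edge e longer than K^2 and cut the cycles of phi at the points matched
   no earlier than e. Each piece is such a walk and e was chosen while its end
   points were free, so K^2 < |e| <= (optimal weight of the piece)^2; the pieces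
   are disjoint and at least as many as the greedy edges longer than K^2. As no
   edge is longer than d, the greedy weight is at most K^2 + d/(K+1) times the
   weight of ANY perfect matching, on any instance: K ~ d^(1/3) gives the factor
   O(d^(2/3)) = o(d^(3/4)) without using boundedness. *)

Local Open Scope nat_scope.

Lemma dist1C d (x y : cube d) : dist1 x y = dist1 y x.
Proof. by apply: eq_card => i; rewrite !inE eq_sym. Qed.

Lemma dist1_triangle d (x y z : cube d) : dist1 x z <= dist1 x y + dist1 y z.
Proof.
have sub : [set i | x i != z i] \subset [set i | x i != y i] :|: [set i | y i != z i].
  by apply/fintype.subsetP => i; rewrite !inE; case: (x i) (y i) (z i) => [] [] [].
by apply: leq_trans (subset_leq_card sub) _; rewrite cardsU leq_subr.
Qed.

Lemma dist1_le d (x y : cube d) : dist1 x y <= d.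
Proof. by rewrite -{2}[d]card_ord max_card. Qed.

Lemma dist1_zigzag d (x w y z : cube d) :
  dist1 x y <= dist1 x z + dist1 w z + dist1 w y.
Proof.
rewrite -addnA; apply: leq_trans (dist1_triangle x z y) _; rewrite leq_add2l.
by rewrite (dist1C w z); exact: dist1_triangle.
Qed.

Lemma sqr_split_bound D D1 D2 l A1 A2 :
  D <= D1 + l + D2 -> l <= D1 -> l <= D2 -> D1 <= A1 ^ 2 -> D2 <= A2 ^ 2 ->
  D <= (A1 + A2) ^ 2.
Proof.
move=> DD lD1 lD2 DA1 DA2.
have lA : l <= A1 * A2 by case: (leqP A1 A2) => _; nia.
nia.
Qed.

Lemma ex_argmax_nat (f : nat -> nat) i k : i.+1 < k ->
  exists2 j, i < j < k & forall a, i < a < k -> f a <= f j.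
Proof.
move=> ik; have [j ij jmax] :=
  @arg_maxnP _ (Ordinal ik) (fun j : 'I_k => i < j) (fun j => f j) (ltnSn i).
exists j; first by rewrite ij ltn_ord.
by move=> a /andP[ia ak]; exact: (jmax (Ordinal ak)).
Qed.

Section ReturnTime.
Variables (T : finType) (phi : {perm T}) (S : {set T}).

(* The first return of x to S takes (return_time x).+1 steps of phi. *)
Definition return_time x := find (fun b => iter b.+1 phi x \in S) (iota 0 #[phi]%g).

Lemma return_timeP x : x \in S ->
  [/\ return_time x < #[phi]%g, iter (return_time x).+1 phi x \in S &
      forall a, 0 < a <= return_time x -> iter a phi x \notin S].
Proof.
move=> Sx; have phi_gt0 := order_gt0 phi.
have hasS : has (fun b => iter b.+1 phi x \in S) (iota 0 #[phi]%g).
  apply/hasP; exists #[phi]%g.-1; first by rewrite mem_iota; lia.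
  by rewrite prednK // -permX expg_order perm1.
have lt_ret : return_time x < #[phi]%g by move: hasS; rewrite has_find size_iota.
split=> // [|a /andP[a_gt0 a_le]].
  by have := nth_find 0 hasS; rewrite nth_iota.
have lt_a : a.-1 < return_time x by lia.
by have := before_find 0 lt_a; rewrite nth_iota ?add0n ?prednK // => [->|]; lia.
Qed.

Lemma return_segment_inj x y a b : x \in S -> y \in S ->
  a <= return_time x -> b <= return_time y -> iter a phi x = iter b phi y ->
  a = b /\ x = y.
Proof.
wlog le_ab : x y a b / a <= b.
  move=> hwlog Sx Sy ax yb e; case: (leqP a b) => [|/ltnW] ab; first exact: hwlog.
  by have [-> ->] := hwlog y x b a ab Sy Sx yb ax (esym e).
move=> Sx Sy _ yb e.
have x_iter : x = iter (b - a) phi y.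
  by apply: (@perm_inj _ (phi ^+ a)%g); rewrite !permX -iterD subnKC.
have [_ _ notS] := return_timeP Sy.
case: (posnP (b - a)) => [ba0|ba_gt0]; first by rewrite x_iter ba0; split=> //; lia.
by move: Sx; rewrite x_iter (negbTE (notS _ _)) // ba_gt0; lia.
Qed.

Lemma sum_return_segments_le (o : T -> nat) :
  \sum_(x in S) \sum_(a < (return_time x).+1) o (iter a phi x) <= \sum_x o x.
Proof.
pose N := #[phi]%g; pose seg (p : T * 'I_N) := iter p.2 phi p.1.
pose P := [set p : T * 'I_N | (p.1 \in S) && (p.2 < (return_time p.1).+1)].
have widen x : x \in S -> \sum_(a < (return_time x).+1) o (iter a phi x) =
    \sum_(a < N | a < (return_time x).+1) o (iter a phi x).
  move=> Sx; have [lt_ret _ _] := return_timeP Sx.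
  by rewrite (big_ord_widen N (fun a => o (iter a phi x))).
have seg_inj : {in P &, injective seg}.
  move=> [x a] [y b]; rewrite !inE /= => /andP[Sx ax] /andP[Sy yb].
  by move=> /(return_segment_inj Sx Sy ax yb) [/val_inj -> ->].
rewrite (eq_bigr _ widen) pair_big_dep (eq_bigl (mem P)) => [|p]; last first.
  by rewrite /= inE.
rewrite -(big_imset _ seg_inj) /= big_mkcond /=.
by apply: leq_sum => y _; case: ifP.
Qed.

End ReturnTime.

Definition match_step n (tau : 'S_n) (i : 'I_n) : nat := (tau^-1)%g i.

Section GreedyMatching.
Variables (d n : nat) (R B : 'I_n -> cube d) (sg so tau : 'S_n).
Hypothesis greedy : forall k i j : 'I_n,
  (forall l : 'I_n, l < k -> tau l != i) ->
  (forall l : 'I_n, l < k -> sg (tau l) != j) ->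
  dist1 (R (tau k)) (B (sg (tau k))) <= dist1 (R i) (B j).

Local Notation step := (match_step tau).
Local Notation ell i := (dist1 (R i) (B (sg i))).
Local Notation opt i := (dist1 (R i) (B (so i))).

Lemma greedy_le i0 i j : step i0 <= step i -> step i0 <= step ((sg^-1)%g j) ->
  ell i0 <= dist1 (R i) (B j).
Proof.
move=> i0_i i0_j; have := @greedy ((tau^-1)%g i0) i j; rewrite permKV; apply.
- move=> l; apply: contraTneq => tl_i.
  by move: i0_i; rewrite -tl_i /match_step permK -leqNgt.
- move=> l; apply: contraTneq => sgtl_j.
  by move: i0_j; rewrite -sgtl_j /match_step !permK -leqNgt.
Qed.

Lemma alternating_walk_bound (p : nat -> 'I_n) : (forall a, sg (p a.+1) = so (p a)) ->
  forall i k T, i < k -> T <= step (p i) -> T <= step (p k) ->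
  (forall a, i < a < k -> step (p a) <= T) ->
  dist1 (R (p i)) (B (sg (p k))) <= (\sum_(i <= a < k) opt (p a)) ^ 2.
Proof.
move=> walk i k T ik; have [N] := ubnP (k - i).
elim: N i k T ik => // N IH i k T ik kiN Ti Tk mid.
have [->|k_ne] := eqVneq k i.+1; first by rewrite big_nat1 walk; nia.
have ik1 : i.+1 < k by rewrite ltn_neqAle eq_sym k_ne ik.
have [j /andP[ij jk] jmax] := ex_argmax_nat (fun a => step (p a)) ik1.
have jT : step (p j) <= T by apply: mid; rewrite ij jk.
have D1 : dist1 (R (p i)) (B (sg (p j))) <= (\sum_(i <= a < j) opt (p a)) ^ 2.
  apply: (IH i j (step (p j)) ij); [lia | lia | by [] |].
  by move=> a /andP[ia aj]; apply: jmax; lia.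
have D2 : dist1 (R (p j)) (B (sg (p k))) <= (\sum_(j <= a < k) opt (p a)) ^ 2.
  apply: (IH j k (step (p j)) jk); [lia | by [] | lia |].
  by move=> a /andP[ja ak]; apply: jmax; lia.
(* The greedy edge at p j was chosen while R (p i) and B (sg (p k)) were free. *)
have l1 : ell (p j) <= dist1 (R (p i)) (B (sg (p j))).
  by apply: greedy_le; rewrite ?permK; lia.
have l2 : ell (p j) <= dist1 (R (p j)) (B (sg (p k))).
  by apply: greedy_le; rewrite ?permK; lia.
rewrite (big_cat_nat (ltnW ij) (ltnW jk)) /=.
exact: sqr_split_bound (dist1_zigzag _ (R (p j)) _ _) l1 l2 D1 D2.
Qed.

Lemma card_long_greedy_edges K :
  K.+1 * #|[set i | K ^ 2 < ell i]| <= mweight R B so.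
Proof.
set C := [set i | _]; have [->|[i1 Ci1]] := set_0Vmem C; first by rewrite cards0 muln0.
have [i0 Ci0 i0_min] := arg_minnP step Ci1.
pose phi := (so * sg^-1)%g; pose S := [set i | step i0 <= step i].
have sg_phi x : sg (phi x) = so x by rewrite permM permKV.
have CS : C \subset S by apply/fintype.subsetP => i /i0_min; rewrite inE.
apply: leq_trans (leq_mul (leqnn _) (subset_leq_card CS)) _.
rewrite mulnC -sum_nat_const; apply: leq_trans (sum_return_segments_le phi S _).
apply: leq_sum => x Sx; have [_ Send Smid] := return_timeP phi Sx.
set m := return_time phi S x in Send Smid *.
have K2_lt : K ^ 2 < dist1 (R x) (B (sg (iter m.+1 phi x))).
  apply: (@leq_trans (ell i0)).
    by have : i0 \in C := Ci0; rewrite inE.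
  by apply: greedy_le; rewrite ?permK; move: Sx Send; rewrite /S !inE.
rewrite -(ltn_exp2r _ _ (ltn0Sn 1)) -(big_mkord xpredT (fun a => opt (iter a phi x))).
apply: leq_trans K2_lt _.
apply: (@alternating_walk_bound (fun a => iter a phi x) (fun a => sg_phi _) 0 m.+1 (step i0)) => //.
- by move: Sx; rewrite /S inE.
- by move: Send; rewrite /S inE.
- by move=> a /Smid; rewrite /S inE -ltnNge => /ltnW.
Qed.

Lemma greedy_weight_bound K :
  K.+1 * mweight R B sg <= (K.+1 * K ^ 2 + d) * mweight R B so.
Proof.
have short := card_long_greedy_edges 0; have long := card_long_greedy_edges K.
have split_weight : mweight R B sg <=
    K ^ 2 * #|[set i | 0 ^ 2 < ell i]| + d * #|[set i | K ^ 2 < ell i]|.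
  rewrite ![_ * #|_|]mulnC -!sum_nat_const [X in _ <= X + _]big_mkcond.
  rewrite [X in _ <= _ + X]big_mkcond -big_split /=; apply: leq_sum => i _.
  by have := dist1_le (R i) (B (sg i)); rewrite !inE; do 2 case: ifP; lia.
rewrite mul1n in short; apply: leq_trans (leq_mul (leqnn K.+1) split_weight) _.
rewrite mulnDr mulnDl mulnA mulnCA.
by apply: leq_add; apply: leq_mul.
Qed.
End GreedyMatching.

Local Open Scope classical_set_scope.
Local Open Scope ring_scope.

Section RealBounds.
Variable R : realType.

Lemma natr_powR_cvgy (r : R) : 0 < r -> (fun n : nat => n%:R `^ r) @ \oo --> +oo.
Proof.
move=> r_gt0; apply/cvgryPge => A; pose A' := Num.max A 0.
have [AA' A'_ge0] : A <= A' /\ 0 <= A' by rewrite !le_max !lexx orbT.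
exists (Num.truncn (A' `^ r^-1)).+1 => // n /= le_n; apply: le_trans AA' _.
have -> : A' = (A' `^ r^-1) `^ r by rewrite -powRrM mulVf ?gt_eqF // powRr1.
apply: (ge0_ler_powR (ltW r_gt0)); rewrite ?nnegrE ?powR_ge0 //.
have /andP[_ /ltW lt_A'] := truncn_itv (powR_ge0 A' r^-1).
by apply: le_trans lt_A' _; rewrite ler_nat.
Qed.

Lemma powR_natr_div (x : R) (k m : nat) : 0 <= x ->
  x `^ (k%:R / m%:R) = (x `^ (1 / m%:R)) ^+ k.
Proof. by move=> x_ge0; rewrite -powR_mulrn ?powR_ge0 // -powRrM mul1r mulrC. Qed.

Definition cbrt_floor (d : nat) : nat := Num.truncn ((d%:R : R) `^ (1/3)).

Definition greedy_ratio (d : nat) : R :=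
  (cbrt_floor d)%:R ^+ 2 + d%:R / (cbrt_floor d).+1%:R.

Lemma greedy_ratio_le d : (0 < d)%N ->
  greedy_ratio d / d%:R `^ (3/4) <= 2 / d%:R `^ (1/12).
Proof.
move=> d_gt0; rewrite /greedy_ratio /cbrt_floor; set y := d%:R `^ (1/12).
have y_gt0 : 0 < y by rewrite powR_gt0 // ltr0n.
have pow_y k : (d%:R : R) `^ (k%:R / 12) = y ^+ k by exact: powR_natr_div.
have -> : (d%:R : R) `^ (1/3) = y ^+ 4 by rewrite -pow_y; congr (_ `^ _); field.
have -> : (d%:R : R) `^ (3/4) = y ^+ 9 by rewrite -pow_y; congr (_ `^ _); field.
have -> : (d%:R : R) = y ^+ 12 by rewrite -pow_y divff ?powRr1 ?ler0n.
have /andP[] := truncn_itv (exprn_ge0 4 (ltW y_gt0)).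
rewrite -natr1; set k := (Num.truncn _)%:R => k_le k_lt.
have k_ge0 : 0 <= k by rewrite ler0n.
rewrite ler_pdivrMr ?exprn_gt0 // [y ^+ 12](exprM y 4 3).
have -> : 2 / y * y ^+ 9 = 2 * (y ^+ 4) ^+ 2 by rewrite -exprM; field; lra.
set z := y ^+ 4 in k_le k_lt *.
have : z ^+ 3 / (k + 1) <= z ^+ 2 by rewrite ler_pdivrMr; nra.
have : k ^+ 2 <= z ^+ 2 by nra.
lra.
Qed.

Lemma greedy_ratio_ge0 d : 0 <= greedy_ratio d.
Proof. by rewrite addr_ge0 ?exprn_ge0 ?divr_ge0. Qed.

Lemma greedy_ratio_cvg :
  (fun d : nat => greedy_ratio d / d%:R `^ (3/4)) @ \oo --> (0 : R).
Proof.
have : (fun d : nat => 2 * ((d%:R : R) `^ (1/12))^-1) @ \oo --> 0.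
  rewrite -[0](mulr0 2); apply: cvgMl_tmp; apply/gtr0_cvgV0.
    by exists 1%N => // d /= d_gt0; rewrite powR_gt0 // ltr0n.
  exact: natr_powR_cvgy.
apply: squeeze_cvgr (cvg_cst 0); exists 1%N => // d /= d_gt0.
by rewrite divr_ge0 ?greedy_ratio_ge0 ?powR_ge0 // greedy_ratio_le.
Qed.

Lemma greedy_ratio_mulSn d : greedy_ratio d * (cbrt_floor d).+1%:R =
  ((cbrt_floor d).+1 * cbrt_floor d ^ 2 + d)%N%:R.
Proof.
by rewrite /greedy_ratio natrD natrM natrX; field; rewrite addrC natr1 pnatr_eq0.
Qed.

End RealBounds.

Theorem corollary1 (Rl : realType) :
  exists f : nat -> Rl,
    (fun d : nat => f d / (d%:R `^ (3 / 4 : Rl))) @ \oo --> (0 : Rl) /\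
    forall (d n : nat) (R B : 'I_n -> cube d) (sg so : 'S_n),
      bounded_instance (d%:R `^ (3 / 4 : Rl)) (d%:R `^ (3 / 4 : Rl)) R B ->
      is_greedy_matching R B sg ->
      is_min_matching R B so ->
      (mweight R B sg)%:R <= f d * (mweight R B so)%:R.
Proof.
exists (greedy_ratio Rl); split; first exact: greedy_ratio_cvg.
move=> d n R B sg so _ [tau greedy] _.
have K1_gt0 : 0 < (cbrt_floor Rl d).+1%:R :> Rl by rewrite ltr0n.
rewrite -(ler_pM2l K1_gt0) mulrA [_ * greedy_ratio _ _]mulrC greedy_ratio_mulSn.
by rewrite -!natrM ler_nat (greedy_weight_bound so greedy).
Qed.
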